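(* In the HTLC game described in the context, choosing to include $tx^{h}_{\mathcal{B}}$ is a unique subgame perfect equilibrium in the last-round subgame $G^{H}(T,\mathrm{red})$, and the utility of miner $i$ when doing so is $\lambda_i f^{h}_{\mathcal{B}}$.
   Context: Blockchain model: $n$ miners; miner $i$ has mining power $\lambda_i>0$ with $0<\lambda_i<1$, $\sum_i\lambda_i=1$, $\lambda_{\min}=\min_i\lambda_i$. Each round exactly one miner is chosen, miner $i$ with probability $\lambda_i$, and creates a block containing one transaction of her choice, receiving its fee. An unrelated transaction offering base fee $f$ is always available. A contract can be redeemed at most once. Miners are rational, non-myopic, with perfect information, maximizing expected tokens. HTLC: a contract holding $v^{\mathrm{dep}}$ tokens initiated in block $b_j$, with digest $dig_a=H(pre_a)$ and timeout $T$, redeemable via htlc-A (signature of $\mathcal{A}$ and $pre_a$; any block) or htlc-B (signature of $\mathcal{B}$; only at least $T$ blocks after initiation). The HTLC game has $T$ rounds creating $b_{j+1},\dots,b_{j+T}$. $\mathcal{A}$ publishes $tx^{h}_{\mathcal{A}}$ (redeems via htlc-A, fee $f^{h}_{\mathcal{A}}$, $f<f^{h}_{\mathcal{A}}<v^{\mathrm{dep}}$) in the first round, and $\mathcal{B}$ publishes $tx^{h}_{\mathcal{B}}$ (redeems via htlc-B, fee $f^{h}_{\mathcal{B}}<v^{\mathrm{dep}}$) with $f^{h}_{\mathcal{B}}>\frac{f^{h}_{\mathcal{A}}-f}{\lambda_{\min}}+f$. A miner can include an unrelated transaction in any round; $tx^{h}_{\mathcal{A}}$ in any round while the HTLC is unredeemed;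 $tx^{h}_{\mathcal{B}}$ only in round $T$ while the HTLC is unredeemed. $G^{H}(k,s)$ denotes the subgame just before round $k\in[1,T]$ with the HTLC redeemable ($\mathrm{red}$) or already redeemed ($\mathrm{irred}$). A miner's utility in a subgame is the expected tokens she accumulates within it. *)

From HB Require Import structures.
From mathcomp Require Import all_boot all_order all_algebra.
Set Implicit Arguments. Unset Strict Implicit. Unset Printing Implicit Defensive.
Import Order.TTheory GRing.Theory Num.Theory.
Local Open Scope ring_scope.

Inductive htlc_action := Unrelated | IncludeA | IncludeB.

(* In round T with the HTLC redeemable (state red), all three actions are
   available: the unrelated tx always, tx_A while unredeemed, and tx_B in
   round T while unredeemed. *)
Definition available_last_red (a : htlc_action) : bool := true.

Definition htlc_fee (R : numDomainType) (f fA fB : R) (a : htlc_action) : R :=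
  match a with Unrelated => f | IncludeA => fA | IncludeB => fB end.

(* A strategy profile in G^H(T, red): sigma i is the transaction miner i
   includes if she is the one selected to create block b_{j+T}. *)
Definition profile (n : nat) := 'I_n -> htlc_action.

Definition deviate n (sigma : profile n) (i : 'I_n) (a : htlc_action) : profile n :=
  fun j => if j == i then a else sigma j.

(* Utility of miner i in G^H(T,red): expected tokens accumulated in the
   (single) last round; miner j is selected with probability lambda j. *)
Definition util_last (R : numDomainType) n (lambda : 'I_n -> R) (f fA fB : R)
  (sigma : profile n) (i : 'I_n) : R :=
  \sum_(j < n) lambda j * (if j == i then htlc_fee f fA fB (sigma j) else 0).

(* Utility of miner i in the proper subgame starting after miner k has been
   selected (the decision node of miner k). *)
Definition util_node (R : numDomainType) n (f fA fB : R)
  (sigma : profile n) (k i : 'I_n) : R :=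
  if k == i then htlc_fee f fA fB (sigma k) else 0.

(* Subgame perfect equilibrium of G^H(T, red): no miner can gain by a
   unilateral deviation to an available action, neither in the whole
   subgame G^H(T,red) nor in any of its proper subgames (the decision nodes
   following the selection of a miner k). *)
Definition spe_last (R : numDomainType) n (lambda : 'I_n -> R) (f fA fB : R)
  (sigma : profile n) : Prop :=
  (forall i a, available_last_red a ->
      util_last lambda f fA fB (deviate sigma i a) i <= util_last lambda f fA fB sigma i)
  /\ (forall k i a, available_last_red a ->
      util_node f fA fB (deviate sigma i a) k i <= util_node f fA fB sigma k i).

(** The last round is a one-shot choice: whichever miner is selected simply
    collects the fee of the transaction she includes.  The bound on [fB]
    makes it exceed both [fA] and [f] (dividing by [lambda_min < 1] only
    enlarges [fA - f]), so including [tx_B] is the strictly dominant choice at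
    every decision node; this forces every subgame perfect equilibrium to be
    "all miners include [tx_B]", which pays miner [i] exactly [lambda i * fB]. *)

From HB Require Import structures.
From mathcomp Require Import all_boot all_order all_algebra.
From mathcomp Require Import lra.
Import Order.TTheory GRing.Theory Num.Theory.
Local Open Scope ring_scope.

Lemma util_lastE (R : numDomainType) n (lambda : 'I_n -> R) f fA fB
    (sigma : profile n) i :
  util_last lambda f fA fB sigma i = lambda i * htlc_fee f fA fB (sigma i).
Proof.
rewrite /util_last (bigD1 i) //= eqxx big1 ?addr0 // => j /negbTE ->.
by rewrite mulr0.
Qed.

Lemma deviate_self n (sigma : profile n) i a : deviate sigma i a i = a.
Proof. by rewrite /deviate eqxx. Qed.

Lemma ltr_pdivr_lt1 (R : realFieldType) (x l : R) :
  0 < x -> 0 < l < 1 -> x < x / l.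
Proof. by move=> x_gt0 /andP[l_gt0 l_lt1]; rewrite ltr_pdivlMr //; nra. Qed.

Section DominantFee.

Variables (R : realFieldType) (f fA fB : R).
Hypotheses (f_lt_fB : f < fB) (fA_lt_fB : fA < fB).

Lemma htlc_fee_le_B (a : htlc_action) : htlc_fee f fA fB a <= fB.
Proof. by case: a => /=; [exact: ltW..| exact: lexx]. Qed.

Lemma htlc_fee_ge_B (a : htlc_action) : fB <= htlc_fee f fA fB a -> a = IncludeB.
Proof. by case: a => //=; rewrite leNgt ?f_lt_fB ?fA_lt_fB. Qed.

Variables (n : nat) (lambda : 'I_n -> R).

Lemma all_B_spe_last (sigma : profile n) : (forall i, 0 <= lambda i) ->
  (forall i, sigma i = IncludeB) -> spe_last lambda f fA fB sigma.
Proof.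
move=> lambda_ge0 all_B; split=> [i a _ | k i a _].
  by rewrite !util_lastE deviate_self all_B ler_wpM2l ?htlc_fee_le_B.
rewrite /util_node; case: eqP => [-> | _] //.
by rewrite deviate_self all_B htlc_fee_le_B.
Qed.

Lemma spe_last_all_B (sigma : profile n) :
  spe_last lambda f fA fB sigma -> forall i, sigma i = IncludeB.
Proof.
case=> _ node_opt i; apply: htlc_fee_ge_B.
by have := node_opt i i IncludeB erefl; rewrite /util_node eqxx deviate_self.
Qed.

End DominantFee.

Theorem lemma8 (R : realFieldType) (n : nat) (lambda : 'I_n -> R)
    (lambda_min f vdep fA fB : R) :
  (forall i, 0 < lambda i < 1) ->
  \sum_(i < n) lambda i = 1 ->
  (forall i, lambda_min <= lambda i) -> (exists i, lambda i = lambda_min) ->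
  f < fA -> fA < vdep ->
  fB < vdep -> (fA - f) / lambda_min + f < fB ->
  (forall sigma : profile n,
      spe_last lambda f fA fB sigma <-> (forall i, sigma i = IncludeB))
  /\ (forall i, util_last lambda f fA fB (fun _ => IncludeB) i = lambda i * fB).
Proof.
move=> lambda_01 _ _ [i0 lambda_i0] f_lt_fA _ _ fB_big.
have lambda_min_01 : 0 < lambda_min < 1 by rewrite -lambda_i0.
have fA_lt_div : fA - f < (fA - f) / lambda_min.
  by apply: ltr_pdivr_lt1; rewrite ?subr_gt0.
have fA_lt_fB : fA < fB by lra.
have f_lt_fB : f < fB by lra.
split=> [sigma | i]; last by rewrite util_lastE.
split; first exact: spe_last_all_B.
apply: all_B_spe_last => // i.
by have /andP[/ltW] := lambda_01 i.
Qed.
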